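(* Let $\mathcal A=\{r_0,\dots,r_m\}\subset\mathbb Z^n$ with $\mathbb Z\mathcal A=\mathbb Z^n$ and $k\in\mathbb N$. Then $\operatorname{trop}(X^{(k)}_{\mathcal A})$ is empty (equivalently, $X^{(k)}_{\mathcal A}$ does not intersect the torus $T_m=\{x\in(\mathbb P^m)^\vee: x_i\ne0\text{ for all }i\}$) if and only if there exists a polynomial $Q$ in $n$ variables of degree at most $k$ which vanishes at all points of $\mathcal A$ but one.
   Context: $X_{\mathcal A}\subset\mathbb P^m$ is the closure of the image of $(\mathbb C^* )^n\to\mathbb P^m$, $x\mapsto(x^{r_0}:\dots:x^{r_m})$. $X^{(k)}_{\mathcal A}\subset(\mathbb P^m)^\vee$ is its $k$-th dual variety: the closure of the set of hyperplanes containing the $k$-th osculating space $\mathbb P(\operatorname{Im}j_{k,x})$ at some smooth point $x$, where $j_{k,x}$ is the Taylor expansion to order $k$. For a projective variety $X\subset\mathbb P^m$ with affine cone $Y$ and ideal $I$ defined over $\mathbb Q$, $\operatorname{trop}(Y)=\{w\in\mathbb R^{m+1}:\operatorname{in}_w(F)\text{ is not a monomial for all }0\ne F\in I\}$ and $\operatorname{trop}(X)$ is the image of $\operatorname{trop}(Y)$ in $\mathbb R^{m+1}/\mathbb R(1,\dots,1)$. *)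

From HB Require Import structures.
From mathcomp Require Import all_boot all_order all_algebra.
From mathcomp Require Import multinomials.mpoly.
From mathcomp.real_closed Require Import complex.
From mathcomp Require Import Rstruct.
From Stdlib Require Rdefinitions.

Set Implicit Arguments.
Unset Strict Implicit.
Unset Printing Implicit Defensive.

Import GRing.Theory Num.Theory.
Local Open Scope ring_scope.

Notation RR := Rdefinitions.R.
Notation CC := (complex Rdefinitions.R).

(* A finite point configuration A = {r_0, ..., r_m} in Z^n, given as an
   indexing r : 'I_(m.+1) -> 'rV[int]_n (assumed injective in the theorem). *)

Definition lattice_generates (n m : nat) (r : 'I_m.+1 -> 'rV[int]_n) : Prop :=
  forall v : 'rV[int]_n, exists c : 'I_m.+1 -> int,
    v = \sum_(i < m.+1) c i *: r i.

Definition lmono (n : nat) (x : 'I_n -> CC) (a : 'rV[int]_n) : CC :=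
  \prod_(j < n) x j ^ (a ord0 j).

Definition ffz (a : int) (l : nat) : int := \prod_(t < l) (a - t%:Z).

(* The partial derivative d^alpha (x^a) of the Laurent monomial x^a
   (alpha a multi-index in N^n), evaluated at x:
   d^alpha x^a = (prod_j ffz a_j alpha_j) x^(a - alpha). *)
Definition dmono (n : nat) (alpha : 'I_n -> nat) (a : 'rV[int]_n)
  (x : 'I_n -> CC) : CC :=
  (\prod_(j < n) ffz (a ord0 j) (alpha j))%:~R *
  lmono x (a - \row_j (alpha j)%:Z).

(* The map phi : (C^* )^n -> C^(m+1), x |-> (x^r_0, ..., x^r_m).  Its
   Taylor expansion to order k at x, j_{k,x}, has image spanned by the
   partial derivatives d^alpha phi (x) with |alpha| <= k.  A hyperplane
   {sum_i c_i y_i = 0} contains the k-th osculating space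
   P(Im j_{k,x}) iff c annihilates all these derivative vectors. *)
Definition osculates (n m k : nat) (r : 'I_m.+1 -> 'rV[int]_n)
  (x : 'I_n -> CC) (c : 'I_m.+1 -> CC) : Prop :=
  forall alpha : 'I_n -> nat, (\sum_(j < n) alpha j <= k)%N ->
    \sum_(i < m.+1) c i * dmono alpha (r i) x = 0.

(* Affine-cone version of the set of hyperplanes containing the k-th
   osculating space at some point x of the dense torus orbit of X_A
   (all such points are smooth). *)
Definition osc_cone (n m k : nat) (r : 'I_m.+1 -> 'rV[int]_n)
  (c : 'I_m.+1 -> CC) : Prop :=
  exists x : 'I_n -> CC, (forall j, x j != 0) /\ osculates k r x c.

(* The ideal of the affine cone Y of X^(k)_A (= Zariski closure of the
   cone above): all polynomials vanishing on osc_cone. *)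
Definition dual_ideal (n m k : nat) (r : 'I_m.+1 -> 'rV[int]_n)
  (F : {mpoly CC[m.+1]}) : Prop :=
  forall c, osc_cone k r c -> F.@[c] = 0.

Definition mweight (N : nat) (w : 'I_N -> RR) (e : 'X_{1.. N}) : RR :=
  \sum_(i < N) w i * (e i)%:R.

Definition init_form (N : nat) (w : 'I_N -> RR) (F : {mpoly CC[N]})
  : {mpoly CC[N]} :=
  \sum_(e <- msupp F |
        all (fun e' => mweight w e <= mweight w e') (msupp F))
     F@_e *: 'X_[e].

Definition is_monomial (N : nat) (G : {mpoly CC[N]}) : Prop :=
  exists (a : CC) (e : 'X_{1.. N}), a != 0 /\ G = a *: 'X_[e].

Definition trop_cone (n m k : nat) (r : 'I_m.+1 -> 'rV[int]_n)
  (w : 'I_m.+1 -> RR) : Prop :=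
  forall F : {mpoly CC[m.+1]}, dual_ideal k r F -> F != 0 ->
    ~ is_monomial (init_form w F).

(* trop(X^(k)_A) is the image of trop(Y) in R^(m+1)/R(1,...,1); it is
   empty iff trop(Y) is empty. *)
Definition trop_dual_empty (n m k : nat) (r : 'I_m.+1 -> 'rV[int]_n) : Prop :=
  forall w : 'I_m.+1 -> RR, ~ trop_cone k r w.

Definition eval_int (n : nat) (Q : {mpoly CC[n]}) (a : 'rV[int]_n) : CC :=
  Q.@[fun j => (a ord0 j)%:~R].

From Pilot Require Import Defs.
From HB Require Import structures.
From mathcomp Require Import all_boot all_order all_algebra.
From mathcomp Require Import multinomials.mpoly.
From mathcomp.real_closed Require Import complex.
From mathcomp Require Import Rstruct.
From mathcomp Require Import ring zify.
From Stdlib Require Import Classical_Prop.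

Set Implicit Arguments.
Unset Strict Implicit.
Unset Printing Implicit Defensive.

Import Order.TTheory GRing.Theory Num.Theory.
Local Open Scope ring_scope.

(* For the weight w = 0 the initial form of F is F itself, and the product of
   all coordinates lies in the ideal of the dual cone unless some osculating
   hyperplane has no zero coordinate; so trop(X^(k)_A) is empty iff there is
   no such hyperplane.  Rescaling c_i by x^(r_i) moves an osculating
   hyperplane at x to one at x = 1, that is, to a vector c with
   sum_i c_i (r_i)_alpha = 0 for all |alpha| <= k, where (a)_alpha is a
   product of falling factorials.  These span the polynomials of degree <= k,
   so such c are the linear relations sum_i c_i Q(r_i) = 0 holding for all Q
   of degree <= k.  A generic combination of relations has no zero coordinate
   unless c_i0 = 0 for every relation c, and by linear duality this means that
   some Q of degree <= k vanishes at every r_i except r_i0. *)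

Definition nowhere_zero (V : zmodType) (N : nat) (c : 'I_N -> V) : Prop :=
  forall i, c i != 0.

Lemma init_form_weight0 (N : nat) (F : {mpoly CC[N]}) :
  init_form (fun _ => 0) F = F.
Proof.
have weight0 e : Defs.mweight (fun _ : 'I_N => 0) e = 0.
  by rewrite /Defs.mweight big1 // => i _; rewrite mul0r.
rewrite /init_form [RHS]mpolyE; apply: eq_bigl => e.
by rewrite weight0; apply/allP => e' _; rewrite weight0.
Qed.

Lemma init_formX (N : nat) (w : 'I_N -> RR) (e : 'X_{1.. N}) :
  init_form w 'X_[e] = 'X_[e].
Proof.
rewrite /init_form msuppX big_cons big_nil /= lexx mcoeffX eqxx.
by rewrite scale1r addr0.
Qed.

Lemma trop_dual_emptyP (n m k : nat) (r : 'I_m.+1 -> 'rV[int]_n) :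
  trop_dual_empty k r <-> ~ exists2 c, nowhere_zero c & osc_cone k r c.
Proof.
split=> [empty [c c_nz c_osc] | no_osc w].
  apply: (empty (fun _ => 0)) => F F_ideal F_nz.
  rewrite init_form_weight0 => -[a [e [a_nz F_eq]]].
  apply/eqP: (F_ideal c c_osc); rewrite F_eq mevalZ mevalX mulf_neq0 //.
  by rewrite prodf_seq_neq0; apply/allP => i _; rewrite expf_neq0.
pose e : 'X_{1.. m.+1} := [multinom 1%N | i < m.+1].
move/(_ 'X_[e]); apply; last 2 first.
- by rewrite -msize_poly_eq0 msizeX.
- by rewrite init_formX; exists 1, e; rewrite scale1r oner_neq0.
move=> c c_osc; rewrite mevalX.
have /existsP[i /eqP ci0] : [exists i, c i == 0].
  apply: contraT; rewrite negb_exists => /forallP c_nz.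
  by case: no_osc; exists c.
by rewrite (bigD1 i) //= ci0 mnmE expr1 mul0r.
Qed.

Lemma lmonoD (n : nat) (x : 'I_n -> CC) (a b : 'rV[int]_n) :
  nowhere_zero x -> lmono x (a + b) = lmono x a * lmono x b.
Proof.
move=> x_nz; rewrite /lmono -big_split.
by apply: eq_bigr => j _; rewrite mxE expfzDr.
Qed.

Lemma lmono_neq0 (n : nat) (x : 'I_n -> CC) (a : 'rV[int]_n) :
  nowhere_zero x -> lmono x a != 0.
Proof.
by move=> x_nz; rewrite prodf_seq_neq0; apply/allP => j _; rewrite expfz_neq0.
Qed.

Lemma lmono1 (n : nat) (a : 'rV[int]_n) : lmono (fun _ => 1) a = 1.
Proof. by rewrite /lmono big1 // => j _; rewrite exp1rz. Qed.

Definition ffcoef (n : nat) (alpha : 'I_n -> nat) (a : 'rV[int]_n) : CC :=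
  (\prod_(j < n) ffz (a ord0 j) (alpha j))%:~R.

Definition ff_kernel (n m k : nat) (r : 'I_m.+1 -> 'rV[int]_n)
    (c : 'I_m.+1 -> CC) : Prop :=
  forall alpha : 'I_n -> nat, (\sum_(j < n) alpha j <= k)%N ->
    \sum_(i < m.+1) c i * ffcoef alpha (r i) = 0.

Lemma ff_kernel0 (n m k : nat) (r : 'I_m.+1 -> 'rV[int]_n) :
  ff_kernel k r (fun _ => 0).
Proof. by move=> alpha _; rewrite big1 // => i _; rewrite mul0r. Qed.

Lemma ff_kernel_comb (n m k : nat) (r : 'I_m.+1 -> 'rV[int]_n)
    (c d : 'I_m.+1 -> CC) (t : CC) :
  ff_kernel k r c -> ff_kernel k r d -> ff_kernel k r (fun i => c i + t * d i).
Proof.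
move=> c_ker d_ker alpha alpha_le.
under eq_bigr do rewrite mulrDl -mulrA.
by rewrite big_split /= -mulr_sumr c_ker // d_ker // mulr0 addr0.
Qed.

(* Since d^alpha x^a = (a)_alpha x^a x^(-alpha), rescaling c_i by x^(r_i)
   turns an osculating hyperplane at x into one at x = 1. *)
Lemma osc_cone_ff_kernelP (n m k : nat) (r : 'I_m.+1 -> 'rV[int]_n) :
  (exists2 c, nowhere_zero c & osc_cone k r c) <->
  (exists2 c, nowhere_zero c & ff_kernel k r c).
Proof.
split=> [[c c_nz [x [x_nz c_osc]]] | [c c_nz c_ker]].
  exists (fun i => c i * lmono x (r i)) => [i | alpha alpha_le].
    by rewrite mulf_neq0 // lmono_neq0.
  have /eqP := c_osc alpha alpha_le.
  rewrite /dmono (eq_bigr (fun i => c i * lmono x (r i) * ffcoef alpha (r i) *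
                   lmono x (- \row_j (alpha j)%:Z))); last first.
    by move=> i _; rewrite lmonoD //; ring.
  by rewrite -mulr_suml mulf_eq0 (negbTE (lmono_neq0 _ x_nz)) orbF => /eqP.
exists c => //; exists (fun _ => 1); split=> [j | alpha alpha_le].
  exact: oner_neq0.
apply: etrans (c_ker alpha alpha_le); apply: eq_bigr => i _.
by rewrite /dmono lmono1 mulr1.
Qed.

Definition upd (n : nat) (f : 'I_n -> nat) (j : 'I_n) (v : nat) : 'I_n -> nat :=
  fun l => if l == j then v else f l.

Lemma big_upd (R : Type) (idx : R) (op : Monoid.com_law idx) (n : nat)
    (g : 'I_n -> nat -> R) (f : 'I_n -> nat) (j : 'I_n) (v : nat) :
  \big[op/idx]_l g l (upd f j v l) =
  op (g j v) (\big[op/idx]_(l | l != j) g l (f l)).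
Proof.
rewrite (bigD1 j) //= /upd eqxx; congr (op _ _).
by apply: eq_bigr => l /negbTE ->.
Qed.

Definition monoz (n : nat) (beta : 'I_n -> nat) (a : 'rV[int]_n) : CC :=
  \prod_(j < n) (a ord0 j)%:~R ^+ beta j.

Lemma ffzS (a : int) (l : nat) : ffz a l.+1 = ffz a l * (a - l%:Z).
Proof. by rewrite /ffz big_ord_recr. Qed.

(* The identity a * (a)_l = (a)_(l+1) + l (a)_l in the j-th variable. *)
Lemma ffcoef_monoz_step (n : nat) (alpha beta : 'I_n -> nat) (j : 'I_n)
    (a : 'rV[int]_n) : (0 < beta j)%N ->
  ffcoef alpha a * monoz beta a =
    ffcoef (upd alpha j (alpha j).+1) a * monoz (upd beta j (beta j).-1) a
    + (alpha j)%:R * (ffcoef alpha a * monoz (upd beta j (beta j).-1) a).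
Proof.
move=> beta_gt0; rewrite /ffcoef /monoz !rmorph_prod /=.
rewrite (big_upd _ (fun l x => (ffz (a ord0 l) x)%:~R : CC)).
rewrite (big_upd _ (fun l x => (a ord0 l)%:~R ^+ x : CC)).
rewrite (bigD1 j (F := fun l => (a ord0 l)%:~R ^+ beta l)) //=.
rewrite (bigD1 j (F := fun l => (ffz (a ord0 l) (alpha l))%:~R)) //= ffzS.
rewrite -{1}(prednK beta_gt0) exprS rmorphM rmorphB /= -pmulrn; ring.
Qed.

Lemma ff_kernel_ffcoef_monoz (n m k : nat) (r : 'I_m.+1 -> 'rV[int]_n)
    (c : 'I_m.+1 -> CC) : ff_kernel k r c ->
  forall alpha beta : 'I_n -> nat, (\sum_j alpha j + \sum_j beta j <= k)%N ->
  \sum_(i < m.+1) c i * (ffcoef alpha (r i) * monoz beta (r i)) = 0.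
Proof.
move=> c_ker alpha beta; move beta_sum: (\sum_j beta j)%N => d.
elim: d alpha beta beta_sum => [|d IH] alpha beta beta_sum deg_le.
  have beta0 j : beta j = 0%N.
    by apply/eqP; move/eqP: beta_sum; rewrite sum_nat_eq0 => /forallP/(_ j).
  rewrite addn0 in deg_le; apply: etrans (c_ker alpha deg_le).
  apply: eq_bigr => i _; rewrite /monoz big1 ?mulr1 // => j _.
  by rewrite beta0 expr0.
have : (\sum_j beta j != 0)%N by rewrite beta_sum.
rewrite sum_nat_eq0 negb_forall => /existsP[j]; rewrite -lt0n => beta_j.
have beta'_sum : (\sum_l upd beta j (beta j).-1 l = d)%N.
  apply/eqP; rewrite -eqSS -beta_sum (big_upd _ (fun _ x => x)).
  by rewrite [X in _ == X](bigD1 j) //= -addSn prednK.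
have alpha'_sum : (\sum_l upd alpha j (alpha j).+1 l = (\sum_l alpha l).+1)%N.
  by rewrite (big_upd _ (fun _ x => x)) [in RHS](bigD1 j).
under eq_bigr => i _ do
  rewrite (ffcoef_monoz_step _ _ beta_j) mulrDr [X in _ + X]mulrCA.
rewrite big_split /= -mulr_sumr !IH ?mulr0 ?addr0 ?alpha'_sum //; lia.
Qed.

Lemma ffcoef0 (n : nat) (a : 'rV[int]_n) : ffcoef (fun _ => 0%N) a = 1.
Proof. by rewrite /ffcoef big1 // => j _; rewrite /ffz big_ord0. Qed.

Lemma ff_kernel_eval (n m k : nat) (r : 'I_m.+1 -> 'rV[int]_n)
    (c : 'I_m.+1 -> CC) (Q : {mpoly CC[n]}) :
  ff_kernel k r c -> (msize Q <= k.+1)%N ->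
  \sum_(i < m.+1) c i * eval_int Q (r i) = 0.
Proof.
move=> c_ker Q_le; rewrite /eval_int.
under eq_bigr => i _ do rewrite mevalE mulr_sumr.
rewrite exchange_big /= big1_seq // => e /andP[_ e_supp].
have e_le : (\sum_j e j <= k)%N.
  by rewrite -mdegE -ltnS (leq_trans (msize_mdeg_lt e_supp)).
have := ff_kernel_ffcoef_monoz c_ker
  (alpha := fun _ => 0%N) (beta := fun j => e j).
rewrite big1 // add0n => /(_ e_le) sum0.
rewrite -[X in _ = X](mulr0 Q@_e) -[X in _ * X]sum0 mulr_sumr.
by apply: eq_bigr => i _; rewrite ffcoef0 mul1r mulrCA.
Qed.

Lemma msize_prod_le (R : idomainType) (n : nat) (I : Type) (s : seq I)
    (F : I -> {mpoly R[n]}) (d : I -> nat) :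
  (forall x, msize (F x) <= (d x).+1)%N ->
  (msize (\prod_(x <- s) F x) <= (\sum_(x <- s) d x).+1)%N.
Proof.
move=> F_le; elim: s => [|x s IH]; first by rewrite !big_nil msize1.
rewrite !big_cons.
have [->|Fx_nz] := eqVneq (F x) 0; first by rewrite mul0r msize0.
have [->|P_nz] := eqVneq (\prod_(y <- s) F y) 0; first by rewrite mulr0 msize0.
by rewrite msizeM //; have := F_le x; lia.
Qed.

Lemma msize_XsubC (R : nzRingType) (n : nat) (j : 'I_n) (c : R) :
  (msize ('X_j - c%:MP : {mpoly R[n]}) <= 2)%N.
Proof.
rewrite (leq_trans (msizeD_le _ _)) // geq_max msizeX mdeg1 msizeN msizeC.
by case: (c != 0).
Qed.

Definition ffpoly (n : nat) (alpha : 'I_n -> nat) : {mpoly CC[n]} :=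
  \prod_(j < n) \prod_(t < alpha j) ('X_j - t%:R%:MP).

Lemma eval_int_ffpoly (n : nat) (alpha : 'I_n -> nat) (a : 'rV[int]_n) :
  eval_int (ffpoly alpha) a = ffcoef alpha a.
Proof.
rewrite /eval_int /ffpoly /ffcoef !rmorph_prod; apply: eq_bigr => j _.
rewrite !rmorph_prod; apply: eq_bigr => t _.
by rewrite !rmorphB /= mevalXU mevalC -pmulrn.
Qed.

Lemma msize_ffpoly (n : nat) (alpha : 'I_n -> nat) :
  (msize (ffpoly alpha) <= (\sum_(j < n) alpha j).+1)%N.
Proof.
apply: msize_prod_le => j; rewrite -[in X in (_ <= X.+1)%N](card_ord (alpha j)).
by rewrite -sum1_card; apply: msize_prod_le => t; apply: msize_XsubC.
Qed.

Lemma exists_avoiding (R : numDomainType) (T : finType) (bad : T -> R) :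
  exists t : R, forall x, t != bad x.
Proof.
pose cand := [seq j%:R : R | j <- iota 0 #|T|.+1].
have cand_uniq : uniq cand.
  by rewrite map_inj_uniq ?iota_uniq // => i i' /eqP; rewrite eqr_nat => /eqP.
have /allPn[_ /mapP[j _ ->] j_good] : ~~ all (fun y => y \in codom bad) cand.
  apply/negP => /allP cand_sub; have := uniq_leq_size cand_uniq cand_sub.
  by rewrite size_map size_iota size_codom ltnn.
by exists j%:R => x; apply: contra j_good => /eqP ->; apply: codom_f.
Qed.

Section GenericCombination.

Variables (R : numFieldType) (N : nat) (S : ('I_N -> R) -> Prop).
Hypothesis S0 : S (fun _ => 0).
Hypothesis S_comb : forall c d t, S c -> S d -> S (fun i => c i + t * d i).

Lemma exists_nowhere_zero :
  (forall i, exists2 c, S c & c i != 0) -> exists2 c, nowhere_zero c & S c.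
Proof.
move=> S_supp.
suff [c Sc c_nz] : exists2 c, S c & {in enum 'I_N, forall i, c i != 0}.
  by exists c => // i; apply: c_nz; rewrite mem_enum.
elim: (enum 'I_N) => [|i s [c Sc c_nz]]; first by exists (fun _ => 0).
have [d Sd di_nz] := S_supp i.
have [t t_good] := exists_avoiding (fun l => - c l / d l).
exists (fun l => c l + t * d l) => [|l]; first exact: S_comb.
rewrite inE => /orP l_in; have [dl0|dl_nz] := eqVneq (d l) 0.
  rewrite dl0 mulr0 addr0; case: l_in => [/eqP li|]; last exact: c_nz.
  by move: di_nz; rewrite -li dl0 eqxx.
apply: contra (t_good l) => /eqP sum0; apply/eqP.
by rewrite -[t](mulfK dl_nz) -[t * d l](addKr (c l)) sum0 addr0.
Qed.

End GenericCombination.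

Definition trunc_ffpoly (n k : nat) (p : {ffun 'I_n -> 'I_k.+1}) :
    {mpoly CC[n]} :=
  if (\sum_j p j <= k)%N then ffpoly (fun j => p j) else 0.

Lemma msize_trunc_ffpoly (n k : nat) (p : {ffun 'I_n -> 'I_k.+1}) :
  (msize (trunc_ffpoly p) <= k.+1)%N.
Proof.
rewrite /trunc_ffpoly; case: ifP => [p_le | _]; last by rewrite msize0.
exact: leq_trans (msize_ffpoly _) _.
Qed.

(* The rows of ffmx span the evaluation vectors (Q(r_i))_i of the Q of degree
   <= k, and ff_kernel is its right kernel. *)
Definition ffmx (n m k : nat) (r : 'I_m.+1 -> 'rV[int]_n) :
    'M[CC]_(#|{ffun 'I_n -> 'I_k.+1}|, m.+1) :=
  \matrix_(p, i) eval_int (trunc_ffpoly (enum_val p)) (r i).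

Lemma ffmxE (n m k : nat) (r : 'I_m.+1 -> 'rV[int]_n) p i :
  ffmx k r p i = eval_int (trunc_ffpoly (enum_val p)) (r i).
Proof. exact: mxE. Qed.

Lemma ff_kernel_cokermx (n m k : nat) (r : 'I_m.+1 -> 'rV[int]_n)
    (j : 'I_m.+1) :
  ff_kernel k r (fun i => cokermx (ffmx k r) i j).
Proof.
move=> alpha alpha_le.
pose p : {ffun 'I_n -> 'I_k.+1} := [ffun l => inord (alpha l)].
have p_alpha l : p l = alpha l :> nat.
  rewrite ffunE inordK // ltnS (leq_trans _ alpha_le) //.
  by rewrite (bigD1 l) //= leq_addr.
move/matrixP/(_ (enum_rank p) j): (mulmx_coker (ffmx k r)).
rewrite !mxE => coker0; rewrite -[X in _ = X]coker0; apply: eq_bigr => i _.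
rewrite ffmxE enum_rankK /trunc_ffpoly.
rewrite (eq_bigr _ (fun l _ => p_alpha l)) alpha_le.
rewrite eval_int_ffpoly mulrC /ffcoef; congr (_%:~R * _).
by apply: eq_bigr => l _; rewrite p_alpha.
Qed.

Lemma ff_kernel_or_separating (n m k : nat) (r : 'I_m.+1 -> 'rV[int]_n)
    (i0 : 'I_m.+1) :
  (exists2 c, ff_kernel k r c & c i0 != 0) \/
  exists Q : {mpoly CC[n]}, (msize Q <= k.+1)%N /\
    eval_int Q (r i0) != 0 /\ forall i, i != i0 -> eval_int Q (r i) = 0.
Proof.
have [/submxP[u u_def] | not_sub] :=
  boolP ((delta_mx 0 i0 : 'rV[CC]_m.+1) <= ffmx k r)%MS.
  right; exists (\sum_p u 0 p *: trunc_ffpoly (enum_val p)).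
  have Q_eval i : eval_int (\sum_p u 0 p *: trunc_ffpoly (enum_val p)) (r i)
                  = (i == i0)%:R.
    move/matrixP/(_ 0 i): u_def; rewrite !mxE eqxx /= => ->.
    rewrite /eval_int raddf_sum; apply: eq_bigr => p _.
    by rewrite /= mevalZ ffmxE.
  split; [|split].
  - apply: leq_trans (msize_sum _ _ _) _; apply/bigmax_leqP => p _.
    exact: leq_trans (msizeZ_le _ _) (msize_trunc_ffpoly _).
  - by rewrite Q_eval eqxx oner_neq0.
  - by move=> i i_ne; rewrite Q_eval (negbTE i_ne).
left; rewrite submxE in not_sub.
have /existsP[j coker_j] :
    [exists j, ((delta_mx 0 i0 : 'rV[CC]_m.+1) *m cokermx (ffmx k r)) 0 j != 0].
  apply: contraR not_sub; rewrite negb_exists => /forallP coker0.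
  by apply/eqP/rowP => j; rewrite [RHS]mxE; apply/eqP/negbNE.
exists (fun i => cokermx (ffmx k r) i j); first exact: ff_kernel_cokermx.
by rewrite -rowE mxE in coker_j.
Qed.

Theorem corollary5p6 (n m : nat) (r : 'I_m.+1 -> 'rV[int]_n) (k : nat) :
  injective r ->
  lattice_generates r ->
  (trop_dual_empty k r <->
   exists Q : {mpoly CC[n]}, (msize Q <= k.+1)%N /\
     exists i0 : 'I_m.+1, eval_int Q (r i0) != 0 /\
       forall i : 'I_m.+1, i != i0 -> eval_int Q (r i) = 0).
Proof.
move=> _ _; split=> [/trop_dual_emptyP no_osc | [Q [Q_le [i0 [Q_i0 Q_i]]]]].
  apply: NNPP => no_sep; apply/no_osc/osc_cone_ff_kernelP.
  apply: exists_nowhere_zero => [|c d t|i0]; first exact: ff_kernel0.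
    exact: ff_kernel_comb.
  have [//|[Q [Q_le Q_sep]]] := ff_kernel_or_separating k r i0.
  by case: no_sep; exists Q; split=> //; exists i0.
apply/trop_dual_emptyP => /osc_cone_ff_kernelP[c c_nz c_ker].
have := ff_kernel_eval c_ker Q_le.
rewrite (bigD1 i0) //= big1 ?addr0 => [|i i_ne]; last by rewrite Q_i // mulr0.
by apply/eqP; rewrite mulf_neq0.
Qed.
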